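(* Let $X$ be a compactum with compatible metric $d$, let $n\in\mathbb{N}$, and let $f:X\to X$ be a function. If $F_n(f)$ is Martelli's chaos, then $f$ is Martelli's chaos.
   Context: A compactum is a nondegenerate compact, perfect, Hausdorff topological space. $F_n(X)$ is the set of nonempty subsets of $X$ with at most $n$ points, with the Hausdorff metric $d_H$ induced by $d$, and $F_n(f)(A)=f(A)$. For a function $g$ on a metric space $(Z,D)$, the orbit of $x\in Z$ is $\{g^k(x):k\in\mathbb{Z}_+\}$; this orbit is unstable if there is $\delta>0$ such that for every neighborhood $U$ of $x$ there exist $y\in U$ and $k\in\mathbb{Z}_+$ with $D(g^k(x),g^k(y))>\delta$. $g$ is Martelli's chaos if there is $x_0\in Z$ whose orbit is dense in $Z$ and unstable. *)

From Stdlib Require Import Reals List Lia.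
Import ListNotations.
Open Scope R_scope.

Set Implicit Arguments.

Section Metric.
Variable X : Type.
Variable d : X -> X -> R.

Definition is_metric : Prop :=
  (forall x y, 0 <= d x y) /\
  (forall x y, d x y = 0 <-> x = y) /\
  (forall x y, d x y = d y x) /\
  (forall x y z, d x z <= d x y + d y z).

Definition open_set (U : X -> Prop) : Prop :=
  forall x, U x -> exists r, 0 < r /\ forall y, d x y < r -> U y.

Definition compact_space : Prop :=
  forall (I : Type) (U : I -> X -> Prop),
    (forall i, open_set (U i)) ->
    (forall x, exists i, U i x) ->
    exists l : list I, forall x, exists i, In i l /\ U i x.

Definition perfect_space : Prop :=
  forall x eps, 0 < eps -> exists y, y <> x /\ d x y < eps.

Definition nondegenerate : Prop := exists x y : X, x <> y.

(** (X,d) is a compactum (a metric space is automatically Hausdorff). *)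
Definition compactum : Prop :=
  is_metric /\ compact_space /\ perfect_space /\ nondegenerate.
End Metric.

Section Martelli.
Variable Z : Type.
Variable D : Z -> Z -> R.
Variable g : Z -> Z.

Definition dense_orbit (x : Z) : Prop :=
  forall z eps, 0 < eps -> exists k : nat, D (Nat.iter k g x) z < eps.

(* every neighbourhood of x contains a ball around x and conversely, so
   quantifying over balls is the same as over neighbourhoods *)
Definition unstable_orbit (x : Z) : Prop :=
  exists delta, 0 < delta /\
    forall eps, 0 < eps ->
      exists y k, D x y < eps /\ D (Nat.iter k g x) (Nat.iter k g y) > delta.

Definition martelli_chaos : Prop :=
  exists x0, dense_orbit x0 /\ unstable_orbit x0.
End Martelli.

(** A nonempty subset with at most n points is
    represented by a list enumerating it (1 <= length <= n); the Hausdorff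
    distance below only depends on the underlying set, so this is the
    usual F_n(X) up to identifying lists with the same elements. *)
Section Hyperspace.
Variable X : Type.
Variable d : X -> X -> R.

Fixpoint minl (h : X -> R) (l : list X) : R :=
  match l with
  | [] => 0
  | [b] => h b
  | b :: l' => Rmin (h b) (minl h l')
  end.

Fixpoint maxl (h : X -> R) (l : list X) : R :=
  match l with
  | [] => 0
  | [b] => h b
  | b :: l' => Rmax (h b) (maxl h l')
  end.

Definition dist_set (x : X) (B : list X) : R := minl (d x) B.

Definition hausdorff (A B : list X) : R :=
  Rmax (maxl (fun a => dist_set a B) A) (maxl (fun b => dist_set b A) B).

Definition Fn (n : nat) : Type :=
  { l : list X | (1 <= length l <= n)%nat }.

Definition dH (n : nat) (A B : Fn n) : R := hausdorff (proj1_sig A) (proj1_sig B).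

Definition Fn_map (n : nat) (f : X -> X) (A : Fn n) : Fn n :=
  exist _ (map f (proj1_sig A))
    (eq_ind_r (fun k => (1 <= k <= n)%nat) (proj2_sig A)
       (length_map f (proj1_sig A))).
End Hyperspace.

(* A point of F_n(X) is a finite set A.  Comparing A with singletons shows
   that every point of A has a dense f-orbit, since d(f^k a, z) is bounded by
   d_H(f^k(A), {z}).  If d_H(A, B) < eps but d_H(f^k(A), f^k(B)) > delta, then
   some a in A and b in B satisfy d(a, b) < eps and d(f^k a, f^k b) > delta.
   So for every eps some point of A witnesses instability at scale eps, and as
   A is finite one point of A does so for arbitrarily small eps. *)

From Stdlib Require Import Reals List Lia Lra Classical.
Import ListNotations.
Open Scope R_scope.
Set Implicit Arguments.

Section MinMaxLists.
Variable X : Type.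
Implicit Types (h : X -> R) (l : list X).

Lemma minl_le h l x : In x l -> minl h l <= h x.
Proof.
  induction l as [|a [|b l] IH]; intros Hx; [destruct Hx| |].
  - destruct Hx as [<-|[]]; simpl; lra.
  - change (minl h (a :: b :: l)) with (Rmin (h a) (minl h (b :: l))).
    destruct Hx as [<-|Hx]; [apply Rmin_l|].
    eapply Rle_trans; [apply Rmin_r | now apply IH].
Qed.

Lemma maxl_ge h l x : In x l -> h x <= maxl h l.
Proof.
  induction l as [|a [|b l] IH]; intros Hx; [destruct Hx| |].
  - destruct Hx as [<-|[]]; simpl; lra.
  - change (maxl h (a :: b :: l)) with (Rmax (h a) (maxl h (b :: l))).
    destruct Hx as [<-|Hx]; [apply Rmax_l|].
    eapply Rle_trans; [now apply IH | apply Rmax_r].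
Qed.

Lemma minl_lt_exists h l e : l <> [] -> minl h l < e -> exists x, In x l /\ h x < e.
Proof.
  induction l as [|a [|b l] IH]; intros Hne Hlt; [congruence| |].
  - exists a; simpl in *; auto.
  - change (minl h (a :: b :: l)) with (Rmin (h a) (minl h (b :: l))) in Hlt.
    unfold Rmin in Hlt; destruct (Rle_dec (h a) (minl h (b :: l))).
    + exists a; simpl; auto.
    + destruct IH as [x [Hx Hhx]]; [congruence | exact Hlt |].
      exists x; simpl; auto.
Qed.

Lemma maxl_gt_exists h l e : l <> [] -> e < maxl h l -> exists x, In x l /\ e < h x.
Proof.
  induction l as [|a [|b l] IH]; intros Hne Hgt; [congruence| |].
  - exists a; simpl in *; auto.
  - change (maxl h (a :: b :: l)) with (Rmax (h a) (maxl h (b :: l))) in Hgt.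
    unfold Rmax in Hgt; destruct (Rle_dec (h a) (maxl h (b :: l))).
    + destruct IH as [x [Hx Hhx]]; [congruence | exact Hgt |].
      exists x; simpl; auto.
    + exists a; simpl; auto.
Qed.

Lemma list_pigeonhole_pos (P : X -> R -> Prop) l :
  (forall a e e', P a e -> e <= e' -> P a e') ->
  (forall e, 0 < e -> exists a, In a l /\ P a e) ->
  exists a, In a l /\ forall e, 0 < e -> P a e.
Proof.
  intros Pmono; induction l as [|a l IH]; intros Hcover.
  - destruct (Hcover 1 Rlt_0_1) as [a [[] _]].
  - destruct (classic (forall e, 0 < e -> P a e)) as [Ha|Ha].
    + exists a; simpl; auto.
    + apply not_all_ex_not in Ha as [e0 He0].
      apply imply_to_and in He0 as [He0 notPa].
      destruct IH as [b [Hb HPb]]; [|exists b; simpl; auto].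
      intros e He.
      destruct (Hcover (Rmin e e0)) as [b [[<-|Hb] HPb]]; [now apply Rmin_pos| |].
      * exfalso; apply notPa; eapply Pmono; [exact HPb | apply Rmin_r].
      * exists b; split; [exact Hb|]; eapply Pmono; [exact HPb | apply Rmin_l].
Qed.

End MinMaxLists.

Section HausdorffDistance.
Variable X : Type.
Variable d : X -> X -> R.
Implicit Types (A B : list X).

Lemma dist_set_le a B b : In b B -> dist_set d a B <= d a b.
Proof. apply minl_le. Qed.

Lemma dist_set_lt_exists a B e :
  B <> [] -> dist_set d a B < e -> exists b, In b B /\ d a b < e.
Proof. apply minl_lt_exists. Qed.

Lemma hausdorff_comm A B : hausdorff d A B = hausdorff d B A.
Proof. apply Rmax_comm. Qed.

Lemma dist_set_le_hausdorff A B a : In a A -> dist_set d a B <= hausdorff d A B.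
Proof.
  intros Ha; eapply Rle_trans; [exact (maxl_ge (fun x => dist_set d x B) _ _ Ha) | apply Rmax_l].
Qed.

Lemma dist_le_hausdorff_singleton A a z : In a A -> d a z <= hausdorff d A [z].
Proof. exact (dist_set_le_hausdorff A [z] a). Qed.

Lemma hausdorff_gt_exists A B r :
  A <> [] -> B <> [] -> r < hausdorff d A B ->
  (exists a, In a A /\ r < dist_set d a B) \/ (exists b, In b B /\ r < dist_set d b A).
Proof.
  intros HA HB Hr; unfold hausdorff, Rmax in Hr.
  destruct (Rle_dec _ _); [right | left]; apply maxl_gt_exists; auto; lra.
Qed.

Lemma hausdorff_map_gt_exists (g : X -> X) A B e delta :
  B <> [] -> hausdorff d A B < e ->
  (exists a, In a A /\ delta < dist_set d (g a) (map g B)) ->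
  exists a b, In a A /\ In b B /\ d a b < e /\ delta < d (g a) (g b).
Proof.
  intros HB HAB [a [Ha Hga]].
  destruct (@dist_set_lt_exists a B e HB) as [b [Hb Hab]].
  { eapply Rle_lt_trans; [exact (dist_set_le_hausdorff A B a Ha) | exact HAB]. }
  exists a, b; repeat split; auto.
  eapply Rlt_le_trans; [exact Hga | apply dist_set_le, in_map, Hb].
Qed.

Hypothesis d_sym : forall x y, d x y = d y x.

Lemma hausdorff_separated_pair (g : X -> X) A B e delta :
  A <> [] -> B <> [] ->
  hausdorff d A B < e -> delta < hausdorff d (map g A) (map g B) ->
  exists a b, In a A /\ In b B /\ d a b < e /\ delta < d (g a) (g b).
Proof.
  intros HA HB HAB Hsep.
  assert (map_ne : forall C : list X, C <> [] -> map g C <> [])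
    by (intros [|c C] HC; [congruence | discriminate]).
  destruct (hausdorff_gt_exists (map_ne _ HA) (map_ne _ HB) Hsep)
    as [[ga [Hga Hfar]] | [gb [Hgb Hfar]]].
  - apply in_map_iff in Hga as [a [<- Ha]].
    apply hausdorff_map_gt_exists; eauto.
  - apply in_map_iff in Hgb as [b [<- Hb]].
    rewrite hausdorff_comm in HAB.
    destruct (@hausdorff_map_gt_exists g B A e delta HA HAB) as [b' [a [Hb' [Ha [Hd Hgd]]]]]; eauto.
    exists a, b'; rewrite (d_sym a), (d_sym (g a)); auto.
Qed.

End HausdorffDistance.

Section HyperspaceOrbits.
Variable X : Type.
Variable d : X -> X -> R.
Variable n : nat.
Variable f : X -> X.

Lemma Fn_nonempty (A : Fn X n) : proj1_sig A <> [].
Proof. destruct A as [[|a l] HA]; simpl in *; [lia | discriminate]. Qed.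

Lemma iter_Fn_map k (A : Fn X n) :
  proj1_sig (Nat.iter k (Fn_map f) A) = map (Nat.iter k f) (proj1_sig A).
Proof.
  induction k as [|k IH]; simpl.
  - now rewrite map_id.
  - now rewrite IH, map_map.
Qed.

Lemma dense_orbit_of_Fn_dense_orbit (A : Fn X n) a :
  dense_orbit (@dH X d n) (Fn_map f) A -> In a (proj1_sig A) -> dense_orbit d f a.
Proof.
  intros Hdense Ha z eps Heps.
  assert (Hz : (1 <= length [z] <= n)%nat)
    by (destruct A as [[|b l] HA]; simpl in *; lia).
  destruct (Hdense (exist _ [z] Hz) eps Heps) as [k Hk].
  exists k; unfold dH in Hk; rewrite iter_Fn_map in Hk.
  eapply Rle_lt_trans; [apply dist_le_hausdorff_singleton, in_map, Ha | exact Hk].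
Qed.

Hypothesis d_sym : forall x y, d x y = d y x.

Lemma unstable_orbit_of_Fn_unstable_orbit (A : Fn X n) :
  unstable_orbit (@dH X d n) (Fn_map f) A ->
  exists a, In a (proj1_sig A) /\ unstable_orbit d f a.
Proof.
  intros [delta [Hdelta Hunst]].
  set (unstable_at a e :=
         exists y k, d a y < e /\ d (Nat.iter k f a) (Nat.iter k f y) > delta).
  destruct (@list_pigeonhole_pos X unstable_at (proj1_sig A)) as [a [Ha Hua]].
  - intros a e e' [y [k [Hy Hk]]] Hle; exists y, k; split; [lra | exact Hk].
  - intros e He; destruct (Hunst e He) as [B [k [HAB Hsep]]].
    unfold dH in HAB, Hsep; rewrite !iter_Fn_map in Hsep.
    destruct (hausdorff_separated_pair d d_sym _ (Fn_nonempty A) (Fn_nonempty B) HAB Hsep)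
      as [a [b [Ha [_ [Hab Hk]]]]].
    exists a; split; [exact Ha|]; exists b, k; auto.
  - exists a; split; [exact Ha|]; exists delta; auto.
Qed.

End HyperspaceOrbits.

Theorem theorem13 (X : Type) (d : X -> X -> R) (n : nat) (f : X -> X) :
  compactum d ->
  martelli_chaos (@dH X d n) (@Fn_map X n f) ->
  martelli_chaos d f.
Proof.
  intros [[_ [_ [d_sym _]]] _] [A [Hdense Hunst]].
  destruct (unstable_orbit_of_Fn_unstable_orbit d_sym Hunst) as [a [Ha Hua]].
  exists a; split; [exact (dense_orbit_of_Fn_dense_orbit a Hdense Ha) | exact Hua].
Qed.
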